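(* Let $G=(V,E)$ be an $n$-vertex graph, $q>0$ an integer, and $0<\alpha<1$. Let $V_\alpha=\{v\in V: r(v)\ge\alpha\}$. Then $|V_\alpha|\le c_q/\alpha$, where $c_q=\sum_{i=0}^{q}q^i$.
   Context: $q$-random BFS ($q$-RBFS) from a vertex $v$ in the random neighbor model (where a random neighbor query for $u$ returns a uniformly random neighbor of $u$): initialize a queue $Q=(v)$, level $\ell[v]=0$ (all others $\infty$), and $H=(\{v\},\emptyset)$ rooted at $v$; while $Q$ is nonempty, pop $u$ and make $q$ independent random neighbor queries for $u$ obtaining $s_{u,1},\dots,s_{u,q}$; for each $i$ add $s_{u,i}$ and the edge $\{u,s_{u,i}\}$ to $H$, and if $\ell[u]<q-1$ and $\ell[s_{u,i}]=\infty$, set $\ell[s_{u,i}]=\ell[u]+1$ and enqueue $s_{u,i}$; return $H$ (undirected, simple). The reach probability $r(v)=r_q(v)$ of a vertex $v$ is the probability that a $q$-RBFS started at a uniformly random vertex of $V$ reaches (i.e., includes in its returned graph) $v$. *)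

From HB Require Import structures.
From mathcomp Require Import all_boot all_order all_algebra.
Set Implicit Arguments. Unset Strict Implicit. Unset Printing Implicit Defensive.
Import Order.TTheory GRing.Theory Num.Theory.
Local Open Scope ring_scope.

Definition simple_graph (T : finType) (e : rel T) : Prop :=
  symmetric e /\ irreflexive e.

Section RBFS.
Variables (R : realFieldType) (T : finType) (e : rel T) (q : nat) (v : T).

Definition nbhd (u : T) : {set T} := [set s | e u s].

(* [rbfs_run fuel Q lvl Hv] is the probability (over the random neighbour
   queries) that the target vertex [v] belongs to the vertex set of the graph
   H returned by the q-RBFS, when the current state of the algorithm is
   queue [Q], level function [lvl] (None = infinity) and vertex set [Hv] of H.
   The edges of H do not influence the execution, so only its vertex set is
   tracked.  [fuel] bounds the number of remaining queue pops; every vertex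
   is enqueued at most once, so fuel #|T| is enough to run to completion.
   The q queries of the popped vertex u are performed one after the other,
   each being uniform over the neighbours of u (averaging over outcomes). *)
Fixpoint rbfs_run (fuel : nat) (Q : seq T) (lvl : T -> option nat)
    (Hv : {set T}) : R :=
  match fuel with
  | 0 => (v \in Hv)%:R
  | fuel'.+1 =>
    match Q with
    | [::] => (v \in Hv)%:R
    | u :: Q' =>
      let l := odflt 0%N (lvl u) in
      let fix qry (k : nat) (Q : seq T) (lvl : T -> option nat)
                  (Hv : {set T}) : R :=
        match k with
        | 0 => rbfs_run fuel' Q lvl Hv
        | k'.+1 =>
          if #|nbhd u| == 0%N then qry k' Q lvl Hv
          else
            (\sum_(s in nbhd u)
               (if (l < q.-1)%N && (lvl s == None) then
                  qry k' (rcons Q s)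
                      (fun x => if x == s then Some l.+1 else lvl x)
                      (s |: Hv)
                else qry k' Q lvl (s |: Hv)))
            / #|nbhd u|%:R
        end
      in qry q Q' lvl Hv
    end
  end.

Definition reach_from (w : T) : R :=
  rbfs_run #|T| [:: w] (fun x => if x == w then Some 0%N else None) [set w].

End RBFS.

Definition reach_prob (R : realFieldType) (T : finType) (e : rel T) (q : nat)
    (v : T) : R :=
  (\sum_(w : T) reach_from R e q v w) / #|T|%:R.

Definition c_q (q : nat) : nat := (\sum_(i < q.+1) q ^ i)%N.

From HB Require Import structures.
From mathcomp Require Import all_boot all_order all_algebra zify.
Set Implicit Arguments. Unset Strict Implicit. Unset Printing Implicit Defensive.
Import Order.TTheory GRing.Theory Num.Theory.
Local Open Scope ring_scope.

(* The expected number of vertices of the returned graph H is at most c_q, by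
   a potential argument: a vertex waiting in the queue at level l will add at
   most [vertex_budget q l] = q + q^2 + ... + q^(q-l) further vertices to H,
   so |H| plus the budgets of the queued vertices never increases in
   expectation, and it equals 1 + (q + ... + q^q) = c_q at the start.  Since
   the expected size of H is the sum over v of the probabilities of reaching
   v, the reach probabilities sum to at most c_q, and Markov's inequality
   gives the bound. *)

Lemma markov_card (R : numDomainType) (T : finType) (f : T -> R) (a : R) :
  (forall x, 0 <= f x) -> #|[set x | a <= f x]|%:R * a <= \sum_x f x.
Proof.
move=> f_ge0; rewrite (bigID (fun x => a <= f x)) /= -[leLHS]addr0.
apply: lerD; last exact: sumr_ge0.
rewrite mulr_natl -sumr_const big_set /=.
exact: ler_sum.
Qed.

Lemma mean_le (R : numFieldType) (T : finType) (A : {set T}) (f : T -> R)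
    (b : R) :
  (0 < #|A|)%N -> (forall x, x \in A -> f x <= b) ->
  (\sum_(x in A) f x) / #|A|%:R <= b.
Proof.
move=> A_gt0 f_le; rewrite ler_pdivrMr ?ltr0n // mulr_natr -sumr_const.
exact: ler_sum.
Qed.

Lemma sum_mem_card (R : pzSemiRingType) (T : finType) (A : {set T}) :
  \sum_x ((x \in A)%:R : R) = #|A|%:R.
Proof. by rewrite -natr_sum -sum1_card [in RHS]big_mkcond. Qed.

Definition query_budget (q l : nat) : nat := (\sum_(i < (q.-1 - l).+1) q ^ i)%N.

Definition vertex_budget (q l : nat) : nat := (q * query_budget q l)%N.

Lemma query_budget_ge1 q l : (1 <= query_budget q l)%N.
Proof. by rewrite /query_budget big_ord_recl expn0 leq_addr. Qed.

Lemma query_budget_rec q l :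
  (l < q.-1)%N -> query_budget q l = (1 + vertex_budget q l.+1)%N.
Proof.
move=> lt_l; rewrite /vertex_budget /query_budget -(subnSK lt_l).
rewrite big_ord_recl expn0 big_distrr; congr (1 + _)%N.
by apply: eq_bigr => i _; rewrite expnS.
Qed.

Lemma leq_vertex_budget q m n :
  (m <= n)%N -> (vertex_budget q n <= vertex_budget q m)%N.
Proof.
move=> le_mn; rewrite leq_mul2l /query_budget; apply/orP; right.
have le_range : ((q.-1 - n).+1 <= (q.-1 - m).+1)%N by rewrite ltnS leq_sub2l.
rewrite (big_ord_widen _ (fun i => q ^ i)%N le_range) big_mkcond /=.
by apply: leq_sum => i _; case: ifP.
Qed.

Lemma c_q_vertex_budget q : (0 < q)%N -> c_q q = (1 + vertex_budget q 0)%N.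
Proof.
move=> q_gt0; rewrite /c_q /vertex_budget /query_budget subn0 prednK //.
rewrite big_ord_recl expn0 big_distrr; congr (1 + _)%N.
by apply: eq_bigr => i _; rewrite expnS.
Qed.

Section RBFSBound.
Variables (R : realFieldType) (T : finType) (e : rel T) (q : nat).

Definition rbfs_potential (Q : seq T) (lvl : T -> option nat)
    (Hv : {set T}) : nat :=
  (#|Hv| + \sum_(x <- Q) vertex_budget q (odflt 0 (lvl x)))%N.

Lemma rbfs_potential_cons u Q lvl Hv :
  rbfs_potential (u :: Q) lvl Hv =
  (rbfs_potential Q lvl Hv + vertex_budget q (odflt 0 (lvl u)))%N.
Proof. by rewrite /rbfs_potential big_cons; lia. Qed.

Lemma rbfs_potential_visit s Q lvl Hv :
  (rbfs_potential Q lvl (s |: Hv) <= (rbfs_potential Q lvl Hv).+1)%N.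
Proof.
by rewrite /rbfs_potential; have := cardsU1 s Hv; have := leq_b1 (s \notin Hv); lia.
Qed.

(* Copies of [s] already in [Q] were charged at the default level 0; moving
   them to level l+1 can only lower their budget. *)
Lemma rbfs_potential_enqueue l s Q lvl Hv :
  (l < q.-1)%N -> lvl s = None ->
  (rbfs_potential (rcons Q s) (fun x => if x == s then Some l.+1 else lvl x)
     (s |: Hv) <= rbfs_potential Q lvl Hv + query_budget q l)%N.
Proof.
move=> lt_l lvl_s; rewrite query_budget_rec // /rbfs_potential.
rewrite -cats1 big_cat big_seq1 /= eqxx /=.
have le_queue : (\sum_(x <- Q)
    vertex_budget q (odflt 0 (if x == s then Some l.+1 else lvl x))
  <= \sum_(x <- Q) vertex_budget q (odflt 0 (lvl x)))%N.
  apply: leq_sum => x _; case: eqP => [->|//].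
  by rewrite lvl_s; apply: leq_vertex_budget.
have := cardsU1 s Hv; have := leq_b1 (s \notin Hv); lia.
Qed.

Definition rbfs_queries (u : T) (l : nat)
    (rec : seq T -> (T -> option nat) -> {set T} -> R) :=
  fix qry (k : nat) (Q : seq T) (lvl : T -> option nat) (Hv : {set T}) : R :=
    match k with
    | 0 => rec Q lvl Hv
    | k'.+1 =>
      if #|nbhd e u| == 0%N then qry k' Q lvl Hv
      else
        (\sum_(s in nbhd e u)
           (if (l < q.-1)%N && (lvl s == None) then
              qry k' (rcons Q s)
                  (fun x => if x == s then Some l.+1 else lvl x)
                  (s |: Hv)
            else qry k' Q lvl (s |: Hv)))
        / #|nbhd e u|%:R
    end.

Lemma rbfs_run_cons v fuel u Q lvl Hv :
  rbfs_run R e q v fuel.+1 (u :: Q) lvl Hv =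
  rbfs_queries u (odflt 0 (lvl u)) (rbfs_run R e q v fuel) q Q lvl Hv.
Proof. by []. Qed.

Lemma rbfs_queries_ge0 u l rec k Q lvl Hv :
  (forall Q lvl Hv, 0 <= rec Q lvl Hv) -> 0 <= rbfs_queries u l rec k Q lvl Hv.
Proof.
move=> rec_ge0; elim: k Q lvl Hv => [|k IH] Q lvl Hv /=; first exact: rec_ge0.
case: ifP => _; first exact: IH.
by apply: divr_ge0 => //; apply: sumr_ge0 => s _; case: ifP.
Qed.

Lemma rbfs_run_ge0 v fuel Q lvl Hv : 0 <= rbfs_run R e q v fuel Q lvl Hv.
Proof.
elim: fuel Q lvl Hv => [|fuel IH] [|u Q] lvl Hv //=; rewrite ?ler0n //.
exact: rbfs_queries_ge0.
Qed.

Lemma sum_rbfs_queries_le u l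
    (rec : T -> seq T -> (T -> option nat) -> {set T} -> R) k Q lvl Hv :
  (forall Q lvl Hv, \sum_v rec v Q lvl Hv <= (rbfs_potential Q lvl Hv)%:R) ->
  \sum_v rbfs_queries u l (rec v) k Q lvl Hv
    <= (rbfs_potential Q lvl Hv + k * query_budget q l)%:R.
Proof.
move=> rec_le; elim: k Q lvl Hv => [|k IH] Q lvl Hv /=.
  by rewrite mul0n addn0.
have [_|nbhd_neq0] := eqVneq #|nbhd e u| 0%N.
  by apply: le_trans (IH _ _ _) _; rewrite ler_nat leq_add2l leq_mul2r leqnSn orbT.
rewrite -mulr_suml exchange_big /=; apply: mean_le; first by rewrite lt0n.
move=> s _; have budget_ge1 := query_budget_ge1 q l.
have [[lt_l /eqP lvl_s]|_] := @andP (l < q.-1)%N (lvl s == None);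
  apply: le_trans (IH _ _ _) _; rewrite ler_nat mulSn addnA leq_add2r.
- exact: rbfs_potential_enqueue.
- by apply: leq_trans (rbfs_potential_visit _ _ _ _) _; rewrite -addn1 leq_add2l.
Qed.

Lemma sum_rbfs_run_le fuel Q lvl Hv :
  \sum_v rbfs_run R e q v fuel Q lvl Hv <= (rbfs_potential Q lvl Hv)%:R.
Proof.
elim: fuel Q lvl Hv => [|fuel IH] [|u Q] lvl Hv;
  try by rewrite /= sum_mem_card ler_nat leq_addr.
under eq_bigr do rewrite rbfs_run_cons.
by rewrite rbfs_potential_cons; apply: sum_rbfs_queries_le.
Qed.

Lemma sum_reach_from_le w :
  (0 < q)%N -> \sum_v reach_from R e q v w <= (c_q q)%:R.
Proof.
move=> q_gt0; apply: le_trans (sum_rbfs_run_le _ _ _ _) _.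
by rewrite /rbfs_potential cards1 big_seq1 /= eqxx c_q_vertex_budget.
Qed.

Lemma reach_prob_ge0 v : 0 <= reach_prob R e q v.
Proof. by rewrite divr_ge0 // sumr_ge0 // => w _; apply: rbfs_run_ge0. Qed.

Lemma sum_reach_prob_le : (0 < q)%N -> \sum_v reach_prob R e q v <= (c_q q)%:R.
Proof.
move=> q_gt0; have [T0|T_gt0] := posnP #|T|.
  by rewrite big1 // => v _; rewrite /reach_prob T0 invr0 mulr0.
rewrite /reach_prob -mulr_suml exchange_big -cardsT /=.
rewrite (eq_bigl [in [set: T]]) => [|w]; last by rewrite in_setT.
by apply: mean_le; rewrite ?cardsT // => w _; apply: sum_reach_from_le.
Qed.

End RBFSBound.

Theorem lemma3p7 (R : realFieldType) (T : finType) (e : rel T) (q : nat)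
    (alpha : R) :
  simple_graph e -> (0 < q)%N -> 0 < alpha -> alpha < 1 ->
  #|[set v : T | alpha <= reach_prob R e q v]|%:R <= (c_q q)%:R / alpha.
Proof.
move=> _ q_gt0 alpha_gt0 _; rewrite ler_pdivlMr //.
apply: le_trans (sum_reach_prob_le R e q_gt0).
by apply: markov_card => v; apply: reach_prob_ge0.
Qed.
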